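(* Let $\mathcal G=(V,E,r)$ be a non-trivial, connected graph. (1) $\mathsf D(\mathbf A(\mathcal G))=2|E|-|V|+1$. (2) An atom $a$ of $\mathbf A(\mathcal G)$ satisfies $\ell(a)=\mathsf D(\mathbf A(\mathcal G))$ if and only if $\operatorname{supp}(a)$ is a tree containing every vertex of $\mathcal G$ of degree at least $2$. In particular, every spanning tree of $\mathcal G$ yields (via its indicator) an atom of maximal sequence-length. If $\mathcal G$ has minimum vertex degree at least $2$, then the atoms of maximal sequence-length are in bijection with the spanning trees of $\mathcal G$.
   Context: A graph $\mathcal G=(V,E,r)$ consists of a finite vertex set $V$, a finite edge set $E$ disjoint from $V$, and a map $r$ assigning to each edge a two-element subset of $V$; multiple edges allowed, no loops. Non-trivial means $\mathcal G$ has more than one vertex. $\deg_{\mathcal G}(v)$ is the number of edges incident with $v$. An agglomeration on $\mathcal G$ is a function $a\colon V\cup E\to\mathbb N_0$ with $a(v)\ge a(e)$ whenever $v$ is incident with $e$; $\mathbf A(\mathcal G)$ is the monoid of agglomerations under pointwise addition. An atom is a nonzero element not a sum of two nonzero elements. $\operatorname{supp}(a)$ is the subgraph of vertices and edges where $a$ is positive. The sequence-length is $\ell(a)=\sum_{v\in V}\deg_{\mathcal G}(v)a(v)-\sum_{e\in E}a(e)$, and the Davenport constant is $\mathsf D(\mathbf A(\mathcal G))=\max\{\ell(a): a\text{ an atom of }\mathbf A(\mathcal G)\}$. *)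

From mathcomp Require Import all_boot all_order all_algebra.
Set Implicit Arguments. Unset Strict Implicit. Unset Printing Implicit Defensive.
Import GRing.Theory Num.Theory.

(* A multigraph G = (V, E, r): V, E finite types, r e a two-element subset of V
   (the hypothesis #|r e| = 2 is taken as an explicit binder of the theorem). *)
Section Agglomerations.
Variables (V E : finType) (r : E -> {set V}).

Definition deg (v : V) : nat := #|[set e | v \in r e]|.

Definition fnVE := {ffun (V + E)%type -> nat}.

Definition agglomeration (a : fnVE) : Prop :=
  forall (e : E) (v : V), v \in r e -> a (inr e) <= a (inl v).

Definition addVE (a b : fnVE) : fnVE := [ffun x => a x + b x].
Definition zeroVE : fnVE := [ffun _ => 0%N].

Definition atom (a : fnVE) : Prop :=
  agglomeration a /\ a <> zeroVE /\
  ~ (exists b c : fnVE, agglomeration b /\ agglomeration c /\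
        b <> zeroVE /\ c <> zeroVE /\ a = addVE b c).

Definition seqlen (a : fnVE) : int :=
  (\sum_(v : V) ((deg v * a (inl v))%N)%:Z - \sum_(e : E) (a (inr e))%:Z)%R.

Definition adj (ES : {set E}) : rel V :=
  fun u w => [exists e in ES, [&& u \in r e, w \in r e & u != w]].

(* a cycle in edge set ES: distinct vertices v_0..v_{k-1} and distinct edges
   e_0..e_{k-1} (k >= 2) with r e_i = {v_i, v_{i+1 mod k}} *)
Definition has_cycle (ES : {set E}) : Prop :=
  exists (k : nat) (vs : k.+2.-tuple V) (es : k.+2.-tuple E),
    [/\ uniq vs, uniq es, (forall i, tnth es i \in ES) &
        forall i, r (tnth es i) = [set tnth vs i; tnth vs (ordS i)]].

Definition is_tree (VS : {set V}) (ES : {set E}) : Prop :=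
  [/\ forall e, e \in ES -> r e \subset VS,
      VS != set0,
      (forall u w, u \in VS -> w \in VS -> connect (adj ES) u w) &
      ~ has_cycle ES].

Definition graph_connected : Prop :=
  forall u w : V, connect (adj setT) u w.

Definition supp_V (a : fnVE) : {set V} := [set v | 0 < a (inl v)].
Definition supp_E (a : fnVE) : {set E} := [set e | 0 < a (inr e)].

Definition spanning_tree (T : {set E}) : Prop := is_tree setT T.

Definition indicator_of (T : {set E}) : fnVE :=
  [ffun x => match x with inl _ => 1%N | inr e => nat_of_bool (e \in T) end].

Definition Dval : int := (2%:Z * #|E|%:Z - #|V|%:Z + 1)%R.

End Agglomerations.
Arguments indicator_of {V E} T.

(* An atom takes only the values 0 and 1 (otherwise it splits off the indicator
   of its support) and has connected support (otherwise it splits along a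
   component).  For such an a, l(a) = sum_{v in supp a} deg v - |supp_E a|, so by
   the handshake lemma
     2|E| - |V| + 1 - l(a) = (|supp_E a| + 1 - |supp_V a|) + sum_{v not in supp a} (deg v - 1).
   Both terms are nonnegative: a connected graph on n vertices has at least n - 1
   edges, and in a connected nontrivial graph every degree is positive.  Equality
   means that the support is a connected graph with one edge fewer than vertices,
   i.e. a tree, and that it contains every vertex of degree at least 2.
   Conversely the indicator of a connected spanning edge set is an atom, because
   in any decomposition b + c the summand b is constant along its edges. *)

From mathcomp Require Import all_boot all_order all_algebra zify.
From Stdlib Require Import ProofIrrelevance.
Import GRing.Theory Num.Theory.
Set Implicit Arguments. Unset Strict Implicit. Unset Printing Implicit Defensive.

Lemma leq_card_rel (T U : finType) (A : {set T}) (B : {set U}) (R : T -> U -> Prop) :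
  (forall x, x \in A -> exists2 y, y \in B & R x y) ->
  (forall x x' y, x \in A -> x' \in A -> R x y -> R x' y -> x = x') ->
  #|A| <= #|B|.
Proof.
move=> totR injR; have [->|[x0 x0A]] := set_0Vmem A; first by rewrite cards0.
have [y0 _ _] := totR x0 x0A.
have /fin_all_exists[f fP] : forall x, exists y, x \in A -> y \in B /\ R x y.
  move=> x; case: (boolP (x \in A)) => [/totR[y yB Rxy]|_]; last by exists y0.
  by exists y.
rewrite -(card_in_imset (f := f)); last first.
  move=> x x' xA x'A fxx'; apply: (injR x x' (f x)) => //; first exact: (fP x xA).2.
  by rewrite fxx'; exact: (fP x' x'A).2.
by apply/subset_leq_card/subsetP=> _ /imsetP[x xA ->]; exact: (fP x xA).1.
Qed.

Lemma sum_pos_card (T : finType) (A : {pred T}) (F : T -> nat) :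
  (forall x, x \in A -> 0 < F x) ->
  \sum_(x in A) F x = #|A| + \sum_(x in A) (F x).-1.
Proof.
move=> Fpos; rewrite -sum1_card -big_split /=.
by apply: eq_bigr => x /Fpos; case: (F x).
Qed.

Lemma ordS_inord n m : m < n.+1 -> ordS (inord m : 'I_n.+1) = inord m.+1.
Proof.
move=> lt_mn; apply: val_inj; rewrite /= inordK // val_insubd.
case: ifP => [/modn_small //|/negbT]; rewrite -leqNgt => le_nm.
have -> : m.+1 = n.+1 by lia.
exact: modnn.
Qed.

Lemma ordS_neq n (i : 'I_n.+2) : ordS i != i.
Proof.
rewrite -val_eqE /=; have := ltn_ord i; rewrite leq_eqVlt => /orP[/eqP iE|lt_i].
  by rewrite iE modnn; case: i iE => -[].
by rewrite modn_small // gtn_eqF.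
Qed.

Section Multigraph.
Variables (V E : finType) (r : E -> {set V}).
Hypothesis hr : forall e, #|r e| = 2.
Implicit Types (ES : {set E}) (VS : {set V}) (a b c : fnVE V E).

Lemma edge_eq_pair e u w : u \in r e -> w \in r e -> u != w -> r e = [set u; w].
Proof.
move=> ue we uw; apply/esym/eqP; rewrite eqEcard hr cards2 uw leqnn andbT.
by apply/subsetP=> x; rewrite !inE => /orP[]/eqP->.
Qed.

Lemma edge_other e v : v \in r e -> exists2 w, w != v & r e = [set v; w].
Proof.
move=> ve; have /card_gt1P[x [y [xe ye xy]]] : 1 < #|r e| by rewrite hr.
have [<-|xv] := eqVneq x v; first by exists y; [rewrite eq_sym | apply: edge_eq_pair].
by exists x => //; apply: edge_eq_pair; rewrite // eq_sym.
Qed.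

Lemma edge_end_eq e u w x : u \in r e -> w \in r e -> x \in r e ->
  u != w -> x != u -> x = w.
Proof.
move=> ue we xe uw xu; move: xe; rewrite (edge_eq_pair ue we uw) !inE.
by rewrite (negbTE xu) => /eqP.
Qed.

Lemma adj_sym ES : symmetric (adj r ES).
Proof.
by move=> x y; apply/existsP/existsP=> -[e /and4P[eES xe ye xy]];
  exists e; rewrite eES xe ye eq_sym.
Qed.

Fixpoint ball (ES : {set E}) (v0 : V) (n : nat) : {set V} :=
  if n is n'.+1 then
    ball ES v0 n' :|: [set w | [exists u in ball ES v0 n', adj r ES u w]]
  else [set v0].

Lemma ball_mono ES v0 : {homo ball ES v0 : m n / m <= n >-> m \subset n}.
Proof.
move=> m n; elim: n => [|n IHn]; first by rewrite leqn0 => /eqP->.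
rewrite leq_eqVlt => /orP[/eqP->//|/IHn sub_mn].
by apply: subset_trans sub_mn (subsetUl _ _).
Qed.

Lemma connect_ball ES v0 w :
  connect (adj r ES) v0 w -> exists n, w \in ball ES v0 n.
Proof.
case/connectP=> p; elim/last_ind: p w => [|p u IHp] w /=.
  by move=> _ ->; exists 0; rewrite inE.
rewrite rcons_path last_rcons => /andP[pp pu] ->.
have [n pn] := IHp _ pp erefl.
by exists n.+1; rewrite /= !inE; apply/orP; right; apply/existsP; exists (last v0 p); rewrite pn.
Qed.

Lemma connected_card_le ES VS v0 : v0 \in VS ->
  (forall w, w \in VS -> connect (adj r ES) v0 w) -> #|VS| <= #|ES| + 1.
Proof.
move=> v0VS conn.
(* Charge each [w != v0] to an edge joining it to a vertex of a smaller ball: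
   no edge is charged twice. *)
pose R w e := [/\ e \in ES, w \in r e & exists2 u, u \in r e &
  exists n, (u \in ball ES v0 n) && (w \notin ball ES v0 n)].
suff: #|VS :\ v0| <= #|ES| by rewrite (cardsD1 v0 VS) v0VS add1n addn1 ltnS.
apply: (@leq_card_rel _ _ _ _ R) => [w|w w' e _ _].
  rewrite !inE => /andP[wv0 /conn/connect_ball ex].
  case: (ex_minnP ex) => -[|n] wn nmin; first by rewrite inE (negbTE wv0) in wn.
  have wNn : w \notin ball ES v0 n by apply/negP => /nmin; rewrite ltnn.
  move: wn; rewrite /= inE (negbTE wNn) inE.
  case/existsP=> u /andP[un /existsP[e /and4P[eES ue we _]]].
  by exists e => //; split=> //; exists u => //; exists n; rewrite un.
move=> [_ we [u ue [n /andP[un wNn]]]] [_ w'e [u' u'e [m /andP[u'm w'Nm]]]].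
have [//|ww'] := eqVneq w w'; exfalso.
have uw : u != w by apply: contraNneq wNn => <-.
have w'u : w' = u by apply: (edge_end_eq we ue w'e); rewrite 1?eq_sym.
have u'w : u' = w.
  by apply: (edge_end_eq ue we u'e); rewrite // -w'u; apply: contraNneq w'Nm => <-.
rewrite w'u in w'Nm; rewrite u'w in u'm.
case: (leqP n m) => [le_nm|/ltnW le_mn].
  by move: w'Nm; rewrite (subsetP (ball_mono ES v0 le_nm) u un).
by move: wNn; rewrite (subsetP (ball_mono ES v0 le_mn) w u'm).
Qed.

Lemma has_cycle_subset (A B : {set E}) : A \subset B -> has_cycle r A -> has_cycle r B.
Proof.
move=> /subsetP AB [k [vs [es [vs_uniq es_uniq esA cyc]]]].
by exists k, vs, es; split=> // i; apply/AB/esA.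
Qed.

Lemma has_cycle_connect ES : has_cycle r ES ->
  exists2 e0, e0 \in ES & forall x y,
    connect (adj r ES) x y -> connect (adj r (ES :\ e0)) x y.
Proof.
move=> [k [vs [es [/tuple_uniqP vs_inj /tuple_uniqP es_inj esES cyc]]]].
set e0 := tnth es ord0; set f := tnth vs.
exists e0; first exact: esES.
pose P i := connect (adj r (ES :\ e0)) (f (inord 1)) (f i).
have stepP i : i != ord0 -> P i -> P (ordS i).
  move=> i0 Pi; apply: connect_trans Pi (connect1 _); apply/existsP; exists (tnth es i).
  by rewrite !inE esES cyc !inE !eqxx orbT (inj_eq es_inj) i0 (inj_eq vs_inj) eq_sym ordS_neq.
have P0 : P ord0.
  have Pn n : n < k.+2 -> P (inord n.+1).
    elim: n => [|n IHn lt_n]; first by rewrite /P connect0.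
    rewrite -ordS_inord //; apply: stepP; last exact/IHn/ltnW.
    by rewrite -val_eqE /= inordK.
  (* [inord k.+2] is out of range, hence [ord0]. *)
  have := Pn k.+1 (ltnSn _); congr (P _); apply: val_inj.
  by rewrite /= val_insubd ltnn.
have P0' : connect (adj r (ES :\ e0)) (f ord0) (f (inord 1)).
  by rewrite (sym_connect_sym (@adj_sym _)).
have f1 : f (ordS ord0) = f (inord 1) by congr f; apply: val_inj; rewrite /= inordK.
move=> x0 y0; apply: connect_sub => x y /existsP[e /and4P[eES xe ye xy]].
have [eE|ne0] := eqVneq e e0; last first.
  by apply/connect1/existsP; exists e; rewrite !inE ne0 eES xe ye xy.
move: xe ye xy; rewrite eE /e0 cyc -/f f1 !inE.
by case/orP=> /eqP-> /orP[]/eqP->; rewrite ?eqxx.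
Qed.

Lemma closed_walk_cycle ES k (x : nat -> V) (g : nat -> E) :
  (forall n, g n \in ES) -> (forall n, r (g n) = [set x n; x n.+1]) ->
  (forall n, g n.+1 != g n) ->
  (forall i j, i < k.+2 -> j < k.+2 -> x i = x j -> i = j) -> x k.+2 = x 0 ->
  has_cycle r ES.
Proof.
move=> gES gx nonback x_inj closed.
(* Distinct vertices force distinct edges, except around a 2-cycle, which
   non-backtracking rules out. *)
have g_neq i j : i < j -> j < k.+2 -> g i != g j.
  move=> lt_ij lt_jk; apply/eqP => gij.
  have in_gj y : y \in r (g i) -> y = x j \/ y = x j.+1.
    by rewrite gij gx !inE => /orP[]/eqP; [left|right].
  have [/x_inj xij|xij1] := in_gj (x i) ltac:(by rewrite gx !inE eqxx).
    by have := xij ltac:(lia) lt_jk; lia.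
  have [lt_j1k|le_kj] := ltnP j.+1 k.+2.
    by have := x_inj i j.+1 ltac:(lia) lt_j1k xij1; lia.
  have jE : j = k.+1 by lia.
  have [xi1j|xi1j1] := in_gj (x i.+1) ltac:(by rewrite gx !inE eqxx orbT).
    have ij : i.+1 = j := x_inj i.+1 j ltac:(lia) lt_jk xi1j.
    by move: (nonback i); rewrite ij -gij eqxx.
  by have := x_inj i.+1 0 ltac:(lia) erefl ltac:(by rewrite xi1j1 jE closed).
have g_inj i j : i < k.+2 -> j < k.+2 -> g i = g j -> i = j.
  move=> lt_ik lt_jk gij; case: (ltngtP i j) => // [lt_ij|lt_ji].
    by move: (g_neq i j lt_ij lt_jk); rewrite gij eqxx.
  by move: (g_neq j i lt_ji lt_ik); rewrite gij eqxx.
exists k, [tuple x m | m < k.+2], [tuple g m | m < k.+2]; split.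
- apply/tuple_uniqP => i j; rewrite !tnth_mktuple => /x_inj xij.
  exact/val_inj/xij.
- apply/tuple_uniqP => i j; rewrite !tnth_mktuple => /g_inj gij.
  exact/val_inj/gij.
- by move=> i; rewrite tnth_mktuple.
move=> i; rewrite !tnth_mktuple gx; congr [set _; _] => /=.
have := ltn_ord i; rewrite leq_eqVlt => /orP[/eqP->|lt_i]; last by rewrite modn_small.
by rewrite modnn closed.
Qed.

Lemma walk_has_cycle ES (x : nat -> V) (g : nat -> E) :
  (forall n, g n \in ES) -> (forall n, r (g n) = [set x n; x n.+1]) ->
  (forall n, g n.+1 != g n) -> has_cycle r ES.
Proof.
move=> gES gx nonback.
have x_rep : exists j, [exists i : 'I_j, x i == x j].
  have /injectivePn[i [j ij xij]] : ~~ injectiveb (fun i : 'I_#|V|.+1 => x i).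
    by apply/injectiveP => /leq_card; rewrite card_ord ltnn.
  case: (ltngtP i j) ij => [lt_ij _|lt_ji _|/val_inj->]; last by rewrite eqxx.
    by exists j; apply/existsP; exists (Ordinal lt_ij); rewrite xij.
  by exists i; apply/existsP; exists (Ordinal lt_ji); rewrite xij.
case: (ex_minnP x_rep) => j /existsP[[i lt_ij] /= /eqP xij] jmin.
have x_inj p q : p < j -> q < j -> x p = x q -> p = q.
  move=> pj qj xpq; case: (ltngtP p q) => // [lt_pq|lt_qp].
    suff: j <= q by rewrite leqNgt qj.
    by apply/jmin/existsP; exists (Ordinal lt_pq); rewrite xpq.
  suff: j <= p by rewrite leqNgt pj.
  by apply/jmin/existsP; exists (Ordinal lt_qp); rewrite xpq.
have lt_i1j : i.+1 < j.
  rewrite ltn_neqAle lt_ij andbT; apply: contra_eqN (hr (g i)) => /eqP ji.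
  by rewrite gx ji -xij setUid cards1.
apply: (@closed_walk_cycle ES (j - i.+2) (fun n => x (i + n)) (fun n => g (i + n))).
- by move=> n; apply: gES.
- by move=> n; rewrite gx addnS.
- by move=> n; rewrite addnS.
- move=> p q pk qk /x_inj; lia.
by rewrite addn0 xij; congr x; lia.
Qed.

Lemma min_deg2_has_cycle ES VS v0 :
  (forall e, e \in ES -> r e \subset VS) -> v0 \in VS ->
  (forall v, v \in VS -> 1 < #|ES :&: [set e | v \in r e]|) -> has_cycle r ES.
Proof.
move=> ES_VS v0VS deg2.
(* Degree at least 2 lets a walk always leave a vertex by another edge. *)
pose I (p : V * E) := (p.2 \in ES) && (p.1 \in r p.2).
have /fin_all_exists[step stepP] : forall p : V * E, exists q : V * E,
    I p -> [/\ q.2 \in ES, q.2 != p.2 & r q.2 = [set p.1; q.1]].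
  case=> v e; case: (boolP (I (v, e))) => [/andP[/= eES ve]|_]; last by exists (v, e).
  have /card_gt1P[f [f' [fin f'in ff']]] := deg2 v (subsetP (ES_VS e eES) v ve).
  have [g] : exists2 g, g \in ES :&: [set e | v \in r e] & g != e.
    by have [fe|] := eqVneq f e; [exists f'; rewrite // -fe eq_sym | exists f].
  rewrite !inE => /andP[gES vg] ge; have [w _ gw] := edge_other vg.
  by exists (w, g).
have [e0] : exists e0, e0 \in ES :&: [set e | v0 \in r e].
  by apply/card_gt0P/ltnW/deg2.
rewrite !inE => /andP[e0ES v0e0].
pose s n := iter n step (v0, e0).
have Is n : I (s n).
  elim: n => [|n IHn]; first by rewrite /I /= e0ES v0e0.
  by have [gES _ gE] := stepP _ IHn; rewrite /I /= gES gE !inE eqxx orbT.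
apply: (@walk_has_cycle ES (fun n => (s n).1) (fun n => (s n.+1).2)).
- by move=> n; case: (stepP _ (Is n)).
- by move=> n; case: (stepP _ (Is n)).
- by move=> n; case: (stepP _ (Is n.+1)).
Qed.

Lemma has_cycle_of_card_le ES VS : (forall e, e \in ES -> r e \subset VS) ->
  VS != set0 -> #|VS| <= #|ES| -> has_cycle r ES.
Proof.
move: {2}#|VS| (erefl #|VS|) => n; elim: n VS ES => [|n IHn] VS ES cardVS ES_VS.
  by rewrite -cards_eq0 cardVS.
move=> _; case: n IHn cardVS => [_ cardVS|n IHn cardVS].
  rewrite cardVS => /card_gt0P[e eES]; have := subset_leq_card (ES_VS e eES).
  by rewrite hr cardVS.
move=> le_VS_ES.
case: (boolP [exists v in VS, #|ES :&: [set e | v \in r e]| <= 1]); last first.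
  rewrite negb_exists => /forallP deg2.
  have [v0 v0VS] : exists v0, v0 \in VS by apply/card_gt0P; rewrite cardVS.
  by apply: (min_deg2_has_cycle ES_VS v0VS) => v vVS; have := deg2 v; rewrite vVS ltnNge.
case/existsP=> v /andP[vVS deg_v]; set D := [set e | v \in r e] in deg_v.
have cardVSv : #|VS :\ v| = n.+1 by move: cardVS; rewrite (cardsD1 v) vVS => -[].
apply: (has_cycle_subset (subsetDl ES D)); apply: (IHn (VS :\ v)) => //.
- move=> e; rewrite !inE => /andP[ve eES]; apply/subsetP => w we.
  by rewrite !inE (subsetP (ES_VS e eES) w we) andbT; apply: contraNneq ve => <-.
- by rewrite -card_gt0 cardVSv.
- by have := cardsID D ES; lia.
Qed.

Lemma is_tree_card VS ES : (forall e, e \in ES -> r e \subset VS) -> VS != set0 ->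
  (forall u w, u \in VS -> w \in VS -> connect (adj r ES) u w) ->
  is_tree r VS ES <-> #|ES| + 1 = #|VS|.
Proof.
move=> ES_VS VSn0 conn; have /set0Pn[v0 v0VS] := VSn0.
have le_VS := connected_card_le v0VS (fun w => conn v0 w v0VS).
split=> [[_ _ _ acyc]|cardES].
  apply/eqP; rewrite eqn_leq le_VS andbT addn1 ltnNge; apply/negP => le_VS_ES.
  exact: acyc (has_cycle_of_card_le ES_VS VSn0 le_VS_ES).
split=> // /has_cycle_connect[e0 e0ES conn'].
have := connected_card_le v0VS (fun w wVS => conn' _ _ (conn v0 w v0VS wVS)).
by move: cardES; rewrite (cardsD1 e0 ES) e0ES; lia.
Qed.

Lemma agglomeration_eq0 a :
  agglomeration r a -> (forall v, a (inl v) = 0) -> a = zeroVE V E.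
Proof.
move=> agg_a a0; apply/ffunP => -[v|e]; rewrite ffunE ?a0 //.
have /card_gt0P[v ve] : 0 < #|r e| by rewrite hr.
by have := agg_a e v ve; rewrite a0 leqn0 => /eqP.
Qed.

Lemma agglomeration_supp a e :
  agglomeration r a -> e \in supp_E a -> r e \subset supp_V a.
Proof.
move=> agg_a; rewrite inE => ae; apply/subsetP => v ve; rewrite inE.
exact: leq_trans ae (agg_a e v ve).
Qed.

Lemma agglomeration_addE b c e v :
  agglomeration r b -> agglomeration r c -> v \in r e ->
  addVE b c (inr e) = addVE b c (inl v) -> b (inr e) = b (inl v).
Proof.
move=> agg_b agg_c ve; rewrite !ffunE.
by have := agg_b e v ve; have := agg_c e v ve; lia.
Qed.

Lemma atom_le1 a x : atom r a -> a x <= 1.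
Proof.
move=> [agg_a [a0 indec]].
pose b : fnVE V E := [ffun y => (a y).-1].
pose c : fnVE V E := [ffun y => nat_of_bool (0 < a y)].
have a_bc : a = addVE b c.
  by apply/ffunP => y; rewrite !ffunE; case: (a y) => //= n; rewrite addn1.
have agg_b : agglomeration r b.
  by move=> e v ve; rewrite !ffunE; have := agg_a e v ve; lia.
have agg_c : agglomeration r c.
  by move=> e v ve; rewrite !ffunE; have := agg_a e v ve; lia.
have c0 : c <> zeroVE V E.
  move=> c0; apply: a0; apply/ffunP => y.
  by have := congr1 (fun f : fnVE V E => f y) c0; rewrite !ffunE; case: (a y).
have [b0|b0] := eqVneq b (zeroVE V E).
  by have := congr1 (fun f : fnVE V E => f x) b0; rewrite !ffunE; lia.
by case: indec; exists b, c; do !split => //; apply/eqP.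
Qed.

Lemma atom_supp_neq0 a : atom r a -> supp_V a != set0.
Proof.
move=> [agg_a [a0 _]]; apply: contra_notN a0 => /eqP suppV0.
apply: agglomeration_eq0 => // v; apply/eqP.
by move/setP/(_ v): suppV0; rewrite !inE lt0n => /negbT; rewrite negbK.
Qed.

Lemma atom_supp_connect a u w : atom r a ->
  u \in supp_V a -> w \in supp_V a -> connect (adj r (supp_E a)) u w.
Proof.
move=> [agg_a [_ indec]]; rewrite !inE => au aw; apply/negPn/negP => not_uw.
set C := [set x | connect (adj r (supp_E a)) u x].
have C_closed e x y : 0 < a (inr e) -> x \in r e -> y \in r e -> x \in C -> y \in C.
  move=> ae xe ye; rewrite !inE => ux; have [<-//|xy] := eqVneq x y.
  by apply: connect_trans ux (connect1 _); apply/existsP; exists e; rewrite !inE ae xe ye xy.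
pose inC (y : V + E) :=
  match y with inl v => v \in C | inr e => [exists x in r e, x \in C] end.
pose b : fnVE V E := [ffun y => if inC y then a y else 0].
pose c : fnVE V E := [ffun y => if inC y then 0 else a y].
case: indec; exists b, c; do ![split].
- move=> e v ve; rewrite !ffunE /=; case: ifP => [/existsP[x /andP[xe xC]]|//].
  have [->//|ae] := posnP (a (inr e)).
  by rewrite (C_closed e x v ae xe ve xC); apply: agg_a.
- move=> e v ve; rewrite !ffunE /=; case: ifP => [//|/negbT/existsPn eC].
  by have := eC v; rewrite ve /= => /negbTE->; apply: agg_a.
- move/(congr1 (fun f : fnVE V E => f (inl u))); rewrite !ffunE /= inE connect0.
  by move=> au0; rewrite au0 in au.
- move/(congr1 (fun f : fnVE V E => f (inl w))); rewrite !ffunE /= inE (negbTE not_uw).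
  by move=> aw0; rewrite aw0 in aw.
by apply/ffunP => y; rewrite !ffunE; case: ifP; rewrite ?addn0.
Qed.

Lemma indicator_atom (T : {set E}) (v0 : V) :
  (forall u w, connect (adj r T) u w) -> atom r (indicator_of T).
Proof.
move=> connT; split; [|split].
- by move=> e v _; rewrite !ffunE; case: (e \in T).
- by move/(congr1 (fun a : fnVE V E => a (inl v0))); rewrite !ffunE.
case=> b [c [agg_b [agg_c [b0 [c0 bc]]]]].
have b_edge e v : e \in T -> v \in r e -> b (inl v) = b (inr e).
  by move=> eT ve; apply/esym/(agglomeration_addE agg_b agg_c ve); rewrite -bc !ffunE eT.
have b_const v : b (inl v) = b (inl v0).
  have cl : closed (adj r T) [pred v | b (inl v) == b (inl v0)].
    by move=> x y /existsP[e /and4P[eT xe ye _]]; rewrite !inE (b_edge e x) ?(b_edge e y).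
  by have := closed_connect cl (connT v0 v); rewrite !inE eqxx => /esym/eqP.
have bc1 v : b (inl v) + c (inl v) = 1.
  by have := congr1 (fun a : fnVE V E => a (inl v)) bc; rewrite !ffunE.
have [b_v0|b_v0] := posnP (b (inl v0)).
  by apply: b0; apply: agglomeration_eq0 => // v; rewrite b_const.
by apply: c0; apply: agglomeration_eq0 => // v; have := bc1 v; rewrite b_const; lia.
Qed.

Lemma sum_deg : \sum_(v : V) deg r v = 2 * #|E|.
Proof.
rewrite /deg; under eq_bigr => v _ do rewrite -sum1dep_card.
rewrite (exchange_big_dep xpredT) //=.
under eq_bigr => e _ do rewrite sum1_card hr.
by rewrite sum_nat_const mulnC; congr (2 * _); apply: eq_card.
Qed.

Lemma seqlen_le1 a : (forall x, a x <= 1) ->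
  seqlen r a = ((\sum_(v in supp_V a) deg r v)%N%:Z - #|supp_E a|%:Z)%R.
Proof.
move=> a_le1; rewrite /seqlen -!(big_morph Posz PoszD (erefl (0 : int))) -sum1_card.
congr (Posz _ - Posz _)%R; rewrite [RHS]big_mkcond /=; apply: eq_bigr.
  move=> v _; rewrite inE; have := a_le1 (inl v).
  by case: (a (inl v)) => [|[]]; rewrite ?muln0 ?muln1.
by move=> e _; rewrite inE; have := a_le1 (inr e); case: (a (inr e)) => [|[]].
Qed.

Lemma atom_card_supp a : atom r a -> #|supp_V a| <= #|supp_E a| + 1.
Proof.
move=> at_a; have /set0Pn[v0 v0S] := atom_supp_neq0 at_a.
by apply: (connected_card_le v0S) => w; apply: atom_supp_connect.
Qed.

Section Connected.
Hypotheses (hnt : 1 < #|V|) (hconn : graph_connected r).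

Lemma deg_gt0 v : 0 < deg r v.
Proof.
have [w wv] : exists w, w != v.
  have /card_gt1P[x [y [_ _ xy]]] := hnt.
  by have [xv|] := eqVneq x v; [exists y; rewrite -xv eq_sym | exists x].
case/connectP: (hconn v w) => -[|y p] /=; first by move=> _ wv'; rewrite wv' eqxx in wv.
by case/andP=> /existsP[e /and4P[_ ve _ _]] _ _; apply/card_gt0P; exists e; rewrite inE.
Qed.

Lemma Dval_seqlen a : (forall x, a x <= 1) ->
  Dval V E = (seqlen r a + ((#|supp_E a| + 1)%N%:Z - #|supp_V a|%:Z)
               + (\sum_(v in ~: supp_V a) (deg r v).-1)%N%:Z)%R.
Proof.
move=> a_le1; rewrite seqlen_le1 // /Dval.
have split_deg : \sum_(v : V) deg r v =
    \sum_(v in supp_V a) deg r v + \sum_(v in ~: supp_V a) deg r v.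
  rewrite (bigID (mem (supp_V a))) /=; congr (_ + _).
  by apply: eq_bigl => v; rewrite in_setC.
have := @sum_pos_card _ (~: supp_V a) (deg r) (fun v _ => deg_gt0 v).
have := cardsC (supp_V a); have := sum_deg; rewrite split_deg.
lia.
Qed.

Lemma atom_seqlen_le a : atom r a -> (seqlen r a <= Dval V E)%R.
Proof.
move=> at_a; rewrite (Dval_seqlen (fun x => atom_le1 x at_a)).
by have := atom_card_supp at_a; lia.
Qed.

Lemma atom_seqlen_eq a : atom r a ->
  seqlen r a = Dval V E <->
  #|supp_E a| + 1 = #|supp_V a| /\ (forall v, 2 <= deg r v -> v \in supp_V a).
Proof.
move=> at_a; rewrite (Dval_seqlen (fun x => atom_le1 x at_a)).
have sum0E : \sum_(v in ~: supp_V a) (deg r v).-1 = 0 <->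
    forall v, 2 <= deg r v -> v \in supp_V a.
  split=> [s0 v dv|deg2].
    apply/negPn/negP => vS; move/eqP: s0; rewrite sum_nat_eq0 => /forallP/(_ v).
    by rewrite in_setC vS /= => /eqP; lia.
  apply/eqP; rewrite sum_nat_eq0; apply/forallP => v; apply/implyP.
  rewrite in_setC => vS; apply/eqP; have := deg2 v; rewrite (negbTE vS); lia.
have := atom_card_supp at_a; rewrite -sum0E; lia.
Qed.

Lemma atom_seqlen_max_iff a : atom r a ->
  seqlen r a = Dval V E <->
  is_tree r (supp_V a) (supp_E a) /\ (forall v, 2 <= deg r v -> v \in supp_V a).
Proof.
move=> at_a; rewrite atom_seqlen_eq // is_tree_card //.
- by move=> e; apply: agglomeration_supp; case: at_a.
- exact: atom_supp_neq0.
by move=> u w; apply: atom_supp_connect.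
Qed.

Lemma spanning_tree_atom T : spanning_tree r T ->
  atom r (indicator_of T) /\ seqlen r (indicator_of T) = Dval V E.
Proof.
move=> [_ VSn0 connT acycT]; have /set0Pn[v0 _] := VSn0.
have at_T : atom r (indicator_of T).
  by apply: (indicator_atom v0) => u w; apply: connT; rewrite inE.
split=> //; apply/(atom_seqlen_max_iff at_T).
have suppV : supp_V (indicator_of T) = [set: V] by apply/setP => v; rewrite !inE ffunE.
have suppE : supp_E (@indicator_of V E T) = T.
  by apply/setP => e; rewrite !inE ffunE; case: (e \in T).
by rewrite suppV suppE; split=> [|v _]; [split | rewrite inE].
Qed.

Lemma exists_spanning_tree : exists T, spanning_tree r T.
Proof.
pose spanning (T : {set E}) := [forall u, forall w, connect (adj r T) u w].
have spanE : spanning [set: E].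
  by apply/forallP => u; apply/forallP => w; apply: hconn.
case: (arg_minnP (fun T : {set E} => #|T|) spanE) => T /forallP spanT minT.
have connT u w : connect (adj r T) u w by move/forallP: (spanT u).
exists T; split=> [e _|||]; first exact: subsetT.
- by rewrite -card_gt0 cardsT; lia.
- by move=> u w _ _; apply: connT.
move=> /has_cycle_connect[e0 e0T connT'].
have: #|T| <= #|T :\ e0|.
  by apply: minT; apply/forallP => u; apply/forallP => w; apply/connT'/connT.
by rewrite (cardsD1 e0 T) e0T; lia.
Qed.

Lemma max_atom_spanning_tree a : (forall v, 2 <= deg r v) ->
  atom r a -> seqlen r a = Dval V E ->
  spanning_tree r (supp_E a) /\ a = indicator_of (supp_E a).
Proof.
move=> deg2 at_a /(atom_seqlen_max_iff at_a)[tree_a allV].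
have suppV : supp_V a = [set: V] by apply/setP => v; rewrite in_setT (allV v (deg2 v)).
split; first by rewrite /spanning_tree -suppV.
apply/ffunP => x; rewrite ffunE; have := atom_le1 x at_a.
case: x => [v|e]; last by rewrite inE; case: (a (inr e)) => [|[]].
by have := allV v (deg2 v); rewrite inE; case: (a (inl v)) => [|[]].
Qed.
End Connected.
End Multigraph.

Lemma indicator_of_inj (V E : finType) : injective (@indicator_of V E).
Proof.
move=> T1 T2 eqT; apply/setP => e.
by have := congr1 (fun a : fnVE V E => a (inr e)) eqT; rewrite !ffunE; do 2!case: (_ \in _).
Qed.

Unset Implicit Arguments.
Theorem proposition4p11 (V E : finType) (r : E -> {set V})
    (hr : forall e, #|r e| = 2) (hnt : 1 < #|V|)
    (hconn : graph_connected r) :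
  (* (1) D(A(G)) = 2|E| - |V| + 1, i.e. this is the maximum of seqlen over atoms *)
  ((exists a, atom r a /\ seqlen r a = Dval V E) /\
   (forall a, atom r a -> (seqlen r a <= Dval V E)%R)) /\
  (* (2) characterization of atoms of maximal sequence-length *)
  (forall a, atom r a ->
     (seqlen r a = Dval V E <->
      is_tree r (supp_V a) (supp_E a) /\
      (forall v, 2 <= deg r v -> v \in supp_V a))) /\
  (* every spanning tree yields, via its indicator, an atom of maximal length *)
  (forall T, spanning_tree r T ->
     atom r (indicator_of T) /\ seqlen r (indicator_of T) = Dval V E) /\
  (* minimum degree >= 2: bijection between maximal atoms and spanning trees *)
  ((forall v, 2 <= deg r v) ->
     exists f : {T : {set E} | spanning_tree r T} -> fnVE V E,
       injective f /\
       (forall a, (atom r a /\ seqlen r a = Dval V E) <-> exists T, f T = a)).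
Proof.
split; [split|split; [|split]].
- have [T spT] := exists_spanning_tree hnt hconn.
  by exists (indicator_of T); apply: spanning_tree_atom.
- exact: atom_seqlen_le.
- exact: atom_seqlen_max_iff.
- exact: spanning_tree_atom.
move=> deg2; exists (fun T => indicator_of (sval T)); split.
  move=> [T1 spT1] [T2 spT2] /= /indicator_of_inj eqT; subst T2.
  by congr exist; apply: proof_irrelevance.
move=> a; split=> [[at_a max_a]|[[T spT] <-]]; last exact: spanning_tree_atom.
have [spT ->] := max_atom_spanning_tree hr hnt hconn deg2 at_a max_a.
by exists (exist _ _ spT).
Qed.
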